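(* The class of axis-aligned rectangles over $\mathbb{R}^d$ has a lossless compression scheme of size at most $2d$ with respect to the query set consisting of the labeling oracle and the odd-one-out oracle $\mathcal{O}_{\text{odd}}$ (with the trivial inference rule).
   Context: Axis-aligned rectangles: indicator functions $h$ of $[a_1,b_1]\times\cdots\times[a_d,b_d]$ with $a_i\le b_i$, where $a_i=-\infty$ or $b_i=\infty$ is allowed (with the corresponding end open). The odd-one-out oracle on $h$ and $x\in\mathbb{R}^d$ returns $\{*\}$ if $h(x)=1$, and otherwise the set of pairs $(i,1)$ with $x_i>b_i$ and $(i,0)$ with $x_i<a_i$; an adversary returns one element of this set. For $S\subseteq\mathbb{R}^d$, $Q_h(S)$ is the set of all combinations of valid responses to all queries on points of $S$, and $q(S)|_W$ the restriction to $W\subseteq S$. A point $x$'s label is inferred by $q(S)$ if all rectangles consistent with $q(S)$ give $x$ the same label; $I(q(S))$ is the set of such points. A lossless compression scheme of size $k$: for every $h$, every $S$ on which $h$ is constant, and every $q(S)\in Q_h(S)$, there is $W\subseteq S$, $|W|\le k$, with $I(q(S))=I(q(S)|_W)$. *)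

From HB Require Import structures.
From mathcomp Require Import all_boot all_order all_algebra.
From mathcomp Require Import reals.

Set Implicit Arguments.
Unset Strict Implicit.
Unset Printing Implicit Defensive.

Import Order.TTheory GRing.Theory Num.Theory.
Local Open Scope ring_scope.

Section Rectangles.
Variables (R : realType) (d : nat).

(* A rectangle [a_1,b_1] x ... x [a_d,b_d] is given by lower ends lo and upper
   ends hi; [None] stands for an infinite end (-oo for lo, +oo for hi), the
   corresponding side being open. *)
Definition ends := 'I_d -> option R.

Definition wf_rect (lo hi : ends) : Prop :=
  forall i a b, lo i = Some a -> hi i = Some b -> a <= b.

Definition in_rect (lo hi : ends) (x : 'rV[R]_d) : bool :=
  [forall i, (if lo i is Some a then a <= x ord0 i else true)
          && (if hi i is Some b then x ord0 i <= b else true)].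

(* Response of the odd-one-out oracle: [None] is the symbol *, and
   [Some (i, true)] / [Some (i, false)] are the pairs (i,1) / (i,0). *)
Definition odd_resp := option ('I_d * bool).

Definition resp := (bool * odd_resp)%type.

Definition valid_odd (lo hi : ends) (x : 'rV[R]_d) (o : odd_resp) : Prop :=
  match o with
  | None => in_rect lo hi x
  | Some (i, true) =>
      ~~ in_rect lo hi x /\ exists b, hi i = Some b /\ b < x ord0 i
  | Some (i, false) =>
      ~~ in_rect lo hi x /\ exists a, lo i = Some a /\ x ord0 i < a
  end.

Definition valid_resp (lo hi : ends) (x : 'rV[R]_d) (r : resp) : Prop :=
  r.1 = in_rect lo hi x /\ valid_odd lo hi x r.2.

(* q (restricted to the points of S) is in Q_h(S); an answer function q
   records one valid response per queried point. *)
Definition in_Q (lo hi : ends) (S : seq 'rV[R]_d) (q : 'rV[R]_d -> resp) : Prop :=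
  forall x, x \in S -> valid_resp lo hi x (q x).

Definition consistent (W : seq 'rV[R]_d) (q : 'rV[R]_d -> resp) (lo hi : ends) : Prop :=
  wf_rect lo hi /\ in_Q lo hi W q.

Definition inferred (W : seq 'rV[R]_d) (q : 'rV[R]_d -> resp) (x : 'rV[R]_d) : Prop :=
  forall lo1 hi1 lo2 hi2, consistent W q lo1 hi1 -> consistent W q lo2 hi2 ->
    in_rect lo1 hi1 x = in_rect lo2 hi2 x.

Definition lossless_compression (k : nat) : Prop :=
  forall (lo hi : ends), wf_rect lo hi ->
  forall S : seq 'rV[R]_d,
    (forall x y, x \in S -> y \in S -> in_rect lo hi x = in_rect lo hi y) ->
  forall q : 'rV[R]_d -> resp, in_Q lo hi S q ->
  exists W : seq 'rV[R]_d,
    [/\ {subset W <= S}, (size W <= k)%N &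
        forall x : 'rV[R]_d, inferred S q x <-> inferred W q x].

End Rectangles.

From mathcomp Require Import all_boot all_order all_algebra.
From mathcomp Require Import reals.

(** For each coordinate [i], keep the sample point with the least [i]-th
    coordinate among those answering [*] or [(i,1)], and the one with the
    greatest [i]-th coordinate among those answering [*] or [(i,0)]; these are
    at most [2d] points.  Since [h] is constant on [S], either every answer is
    [*] or none is.  If all are [*], the kept points span the bounding box of
    [S], so any rectangle containing them contains [S].  Otherwise a point of
    [S] answering [(i,1)] has [i]-th coordinate at least that of the kept point
    [m] answering [(i,1)], so any rectangle for which [(i,1)] is a valid answer
    at [m] also makes it valid at that point (symmetrically for [(i,0)]).
    Either way the kept answers admit exactly the same consistent rectangles as
    all of [q(S)], hence infer the same labels. *)

Set Implicit Arguments.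
Unset Strict Implicit.
Unset Printing Implicit Defensive.
Import Order.TTheory GRing.Theory Num.Theory.
Local Open Scope ring_scope.

Section Least.
Variables (T : eqType) (r : rel T).
Hypotheses (r_total : total r) (r_trans : transitive r).

Definition least (s : seq T) : seq T := take 1 (sort r s).

Lemma size_least s : (size (least s) <= 1)%N.
Proof. by rewrite size_take_min geq_minl. Qed.

Lemma least_subset s : {subset least s <= s}.
Proof. by move=> x /mem_take; rewrite mem_sort. Qed.

Lemma exists_least_le s x : x \in s -> exists2 m, m \in least s & r m x.
Proof.
rewrite -(mem_sort r) /least.
have : sorted r (sort r s) by exact: sort_sorted.
case: (sort r s) => [|m t] //= /(order_path_min r_trans) m_le.
rewrite inE take0 => /predU1P x_mt; exists m; first exact: mem_head.
case: x_mt => [-> | /(allP m_le) //].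
by case/orP: (r_total m m).
Qed.

End Least.

Section Rectangles.
Variables (R : realType) (d : nat).
Implicit Types (lo hi : ends R d) (x y : 'rV[R]_d).

Lemma in_rect_hi lo hi x i b : in_rect lo hi x -> hi i = Some b -> x ord0 i <= b.
Proof. by move/forallP/(_ i) => /andP [_]; case: (hi i) => // b' + [<-]. Qed.

Lemma in_rect_lo lo hi x i a : in_rect lo hi x -> lo i = Some a -> a <= x ord0 i.
Proof. by move/forallP/(_ i) => /andP []; case: (lo i) => // a' + _ [<-]. Qed.

Lemma in_rect_coordwise lo hi x :
  (forall i, exists l u, [/\ in_rect lo hi l, in_rect lo hi u
                           & l ord0 i <= x ord0 i <= u ord0 i]) ->
  in_rect lo hi x.
Proof.
move=> between; apply/forallP => i.
have [l [u [inl inu /andP [lx xu]]]] := between i.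
apply/andP; split.
  by case E: (lo i) => [a|] //; exact: le_trans (in_rect_lo inl E) lx.
by case E: (hi i) => [b|] //; exact: le_trans xu (in_rect_hi inu E).
Qed.

Lemma valid_odd_above lo hi x i b :
  hi i = Some b -> b < x ord0 i -> valid_odd lo hi x (Some (i, true)).
Proof.
move=> hib bx; split; last by exists b.
by apply/negP => /in_rect_hi/(_ hib); rewrite leNgt bx.
Qed.

Lemma valid_odd_below lo hi x i a :
  lo i = Some a -> x ord0 i < a -> valid_odd lo hi x (Some (i, false)).
Proof.
move=> loa xa; split; last by exists a.
by apply/negP => /in_rect_lo/(_ loa); rewrite leNgt xa.
Qed.

Lemma valid_odd_label lo hi x o : valid_odd lo hi x o -> (o == None) = in_rect lo hi x.
Proof. by case: o => [[i []] [/negbTE ->]|]. Qed.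

Lemma valid_respE lo hi x (a : resp d) :
  a.1 = (a.2 == None) -> valid_odd lo hi x a.2 -> valid_resp lo hi x a.
Proof. by move=> label valid; split; rewrite // label (valid_odd_label valid). Qed.

Lemma consistent_subset (W S : seq 'rV[R]_d) q lo hi :
  {subset W <= S} -> consistent S q lo hi -> consistent W q lo hi.
Proof. by move=> WS [wf valid]; split => // x /WS /valid. Qed.

Lemma inferred_consistent_eq (W S : seq 'rV[R]_d) q :
  (forall lo hi, consistent W q lo hi <-> consistent S q lo hi) ->
  forall x, inferred S q x <-> inferred W q x.
Proof.
by move=> eqWS x; split => infer lo1 hi1 lo2 hi2 c1 c2; apply: infer; apply/eqWS.
Qed.

Section Compression.
Variables (q : 'rV[R]_d -> resp d) (S : seq 'rV[R]_d).

Definition answers_toward (i : 'I_d) (up : bool) x : bool :=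
  (q x).2 \in [:: None; Some (i, up)].

Definition coord_le (i : 'I_d) : rel 'rV[R]_d := fun x y => x ord0 i <= y ord0 i.

Definition low_witness i := least (coord_le i) [seq x <- S | answers_toward i true x].

Definition high_witness i :=
  least (fun x y => coord_le i y x) [seq x <- S | answers_toward i false x].

Definition compression : seq 'rV[R]_d :=
  flatten [seq low_witness i ++ high_witness i | i <- enum 'I_d].

Lemma compression_subset : {subset compression <= S}.
Proof.
move=> x /flatten_mapP [i _]; rewrite mem_cat.
by case/orP => /least_subset; rewrite mem_filter => /andP [].
Qed.

Lemma size_compression : (size compression <= 2 * d)%N.
Proof.
rewrite size_flatten /shape -map_comp sumnE big_map big_enum /=.
apply: (@leq_trans (\sum_(i in 'I_d) 2)); last by rewrite sum_nat_const card_ord mulnC.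
apply: leq_sum => i _.
by rewrite size_cat (leq_add (size_least _ _) (size_least _ _)).
Qed.

Hypothesis labels : {in S, forall x, (q x).1 = ((q x).2 == None)}.
Hypothesis uniform : {in S &, forall x y, ((q x).2 == None) = ((q y).2 == None)}.

Lemma same_answer i up x y : x \in S -> y \in S ->
  answers_toward i up x -> answers_toward i up y -> (q x).2 = (q y).2.
Proof.
rewrite /answers_toward !inE => xS yS /orP [] /eqP ex /orP [] /eqP ey;
  by have := uniform xS yS; rewrite ex ey.
Qed.

Lemma low_witness_le i s : s \in S -> answers_toward i true s ->
  exists2 m, m \in compression & (q m).2 = (q s).2 /\ m ord0 i <= s ord0 i.
Proof.
move=> sS toward.
have [m mlow ms] : exists2 m, m \in low_witness i & coord_le i m s.
  apply: exists_least_le; last by rewrite mem_filter toward.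
    by move=> x y; exact: le_total.
  by move=> y x z; exact: le_trans.
have /least_subset := mlow; rewrite mem_filter => /andP [mtoward mS].
exists m; last by split; [exact: same_answer mtoward toward | exact: ms].
by apply/flatten_mapP; exists i; rewrite ?mem_enum // mem_cat mlow.
Qed.

Lemma high_witness_ge i s : s \in S -> answers_toward i false s ->
  exists2 m, m \in compression & (q m).2 = (q s).2 /\ s ord0 i <= m ord0 i.
Proof.
move=> sS toward.
have [m mhigh ms] : exists2 m, m \in high_witness i & coord_le i s m.
  apply: exists_least_le; last by rewrite mem_filter toward.
    by move=> x y; exact: le_total.
  by move=> y x z xy yz; exact: le_trans yz xy.
have /least_subset := mhigh; rewrite mem_filter => /andP [mtoward mS].
exists m; last by split; [exact: same_answer mtoward toward | exact: ms].
by apply/flatten_mapP; exists i; rewrite ?mem_enum // mem_cat mhigh orbT.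
Qed.

Lemma consistent_compression lo hi :
  consistent compression q lo hi -> consistent S q lo hi.
Proof.
move=> [wf validW]; split => // s sS; apply: valid_respE; first exact: labels.
have valid_at m : m \in compression -> valid_odd lo hi m (q m).2.
  by move=> /validW [].
case E: (q s).2 => [[i []]|].
- have [|m mW [Em ms]] := low_witness_le (i := i) sS; first by rewrite /answers_toward E !inE eqxx orbT.
  have := valid_at m mW; rewrite Em E => -[_ [b [hib bm]]].
  exact: valid_odd_above hib (lt_le_trans bm ms).
- have [|m mW [Em sm]] := high_witness_ge (i := i) sS; first by rewrite /answers_toward E !inE eqxx orbT.
  have := valid_at m mW; rewrite Em E => -[_ [a [loa ma]]].
  exact: valid_odd_below loa (le_lt_trans sm ma).
- apply: in_rect_coordwise => i.
  have [|l lW [El ls]] := low_witness_le (i := i) sS; first by rewrite /answers_toward E inE.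
  have [|u uW [Eu su]] := high_witness_ge (i := i) sS; first by rewrite /answers_toward E inE.
  exists l, u; rewrite ls su; split => //.
    by have := valid_at l lW; rewrite El E.
  by have := valid_at u uW; rewrite Eu E.
Qed.

End Compression.
End Rectangles.

Theorem proposition4p1 (R : realType) (d : nat) :
  lossless_compression R d (2 * d).
Proof.
move=> lo hi _ S constant q valid.
have label_in s : s \in S -> ((q s).2 == None) = in_rect lo hi s.
  by move=> /valid [_ /valid_odd_label].
exists (compression q S); split.
- exact: compression_subset.
- exact: size_compression.
- apply: inferred_consistent_eq => lo' hi'; split; last first.
    exact: consistent_subset (@compression_subset _ _ q S).
  apply: consistent_compression => [s sS | x y xS yS].
    by have [-> _] := valid s sS; rewrite label_in.
  by rewrite !label_in // (constant x y).
Qed.
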